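(* Let $Q=ABCD$ be a non-degenerate trapezoid of perimeter $2$, i.e. a convex quadrangle with $AB\parallel CD$, and let $Q^\circ=KLMN$ be its dual. Then $KL\parallel MN$; in particular $Q^\circ$ is a trapezoid.
   Context: Identify $\mathbb{R}^2$ with $\mathbb{C}$. A quadrangle $Q=ABCD$ is an ordered 4-tuple of points $A,B,C,D\in\mathbb{C}$: $A$ is the first vertex and the order $A\to B\to C\to D\to A$ is the direction of traversal. Its edge vectors are $z_1=B-A$, $z_2=C-B$, $z_3=D-C$, $z_4=A-D$, so $z_1+z_2+z_3+z_4=0$; its perimeter is $|z_1|+|z_2|+|z_3|+|z_4|$. $Q$ is non-degenerate if each pair of consecutive edge vectors $(z_1,z_2),(z_2,z_3),(z_3,z_4),(z_4,z_1)$ consists of nonzero, non-collinear vectors. A non-degenerate quadrangle is convex if no two opposite edges intersect and all its interior angles are less than $\pi$. Associated plane: for a non-degenerate $Q$ of perimeter $2$, choose $u_1,\dots,u_4\in\mathbb{C}$ with $u_k^2=z_k$, where $u_1$ is an arbitrary square root of $z_1$ and for $k=1,2,3$ the sign of $u_{k+1}$ is chosen so that $\operatorname{Im}(\overline{u_k}u_{k+1})$ has the same sign as $\operatorname{Im}(\overline{z_k}z_{k+1})$. Write $u_k=a_k+i b_k$ and $\bar a=(a_1,a_2,a_3,a_4)$, $\bar b=(b_1,b_2,b_3,b_4)$; these are orthonormal in $\mathbb{R}^4$. Let $\Pi=\operatorname{span}(\bar a,\bar b)$ and $\Pi^\perp$ its orthogonal complement. Dual quadrangle: choose an orthonormal basis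 $(\bar c,\bar d)$ of $\Pi^\perp$, put $w_k=(c_k+i d_k)^2$; then $\sum_k w_k=0$ and $\sum_k|w_k|=2$. The dual quadrangle $Q^\circ=KLMN$ is the quadrangle with $L-K=w_1$, $M-L=w_2$, $N-M=w_3$, $K-N=w_4$. It is determined up to rotation, reflection and translation. *)

From Stdlib Require Import Reals.
Open Scope R_scope.

(* Complex numbers as pairs (Re, Im). *)
Definition pt : Type := (R * R)%type.
Definition csub (z w : pt) : pt := (fst z - fst w, snd z - snd w).
Definition cadd (z w : pt) : pt := (fst z + fst w, snd z + snd w).
Definition cscale (s : R) (z : pt) : pt := (s * fst z, s * snd z).
Definition cmul (z w : pt) : pt :=
  (fst z * fst w - snd z * snd w, fst z * snd w + snd z * fst w).
Definition csq (z : pt) : pt := cmul z z.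
Definition cabs (z : pt) : R := sqrt (fst z ^ 2 + snd z ^ 2).
(* cross z w = Im (conj z * w) *)
Definition cross (z w : pt) : R := fst z * snd w - snd z * fst w.

Definition e1 (A B C D : pt) : pt := csub B A.
Definition e2 (A B C D : pt) : pt := csub C B.
Definition e3 (A B C D : pt) : pt := csub D C.
Definition e4 (A B C D : pt) : pt := csub A D.

Definition perimeter (A B C D : pt) : R :=
  cabs (e1 A B C D) + cabs (e2 A B C D) + cabs (e3 A B C D) + cabs (e4 A B C D).

Definition noncollinear (z w : pt) : Prop :=
  z <> (0, 0) /\ w <> (0, 0) /\ cross z w <> 0.

Definition nondegenerate (A B C D : pt) : Prop :=
  noncollinear (e1 A B C D) (e2 A B C D) /\
  noncollinear (e2 A B C D) (e3 A B C D) /\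
  noncollinear (e3 A B C D) (e4 A B C D) /\
  noncollinear (e4 A B C D) (e1 A B C D).

Definition segments_meet (P Q R' S : pt) : Prop :=
  exists s t : R, 0 <= s <= 1 /\ 0 <= t <= 1 /\
    cadd P (cscale s (csub Q P)) = cadd R' (cscale t (csub S R')).

(* All interior angles < pi: all turns (cross products of consecutive edges)
   have the same strict sign. *)
Definition angles_lt_pi (A B C D : pt) : Prop :=
  (0 < cross (e1 A B C D) (e2 A B C D) /\ 0 < cross (e2 A B C D) (e3 A B C D) /\
   0 < cross (e3 A B C D) (e4 A B C D) /\ 0 < cross (e4 A B C D) (e1 A B C D)) \/
  (cross (e1 A B C D) (e2 A B C D) < 0 /\ cross (e2 A B C D) (e3 A B C D) < 0 /\
   cross (e3 A B C D) (e4 A B C D) < 0 /\ cross (e4 A B C D) (e1 A B C D) < 0).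

Definition convex (A B C D : pt) : Prop :=
  nondegenerate A B C D /\
  ~ segments_meet A B C D /\ ~ segments_meet B C D A /\
  angles_lt_pi A B C D.

Definition parallel (z w : pt) : Prop := cross z w = 0.

Definition same_sign (x y : R) : Prop := (0 < x /\ 0 < y) \/ (x < 0 /\ y < 0).

Definition admissible_roots (A B C D u1 u2 u3 u4 : pt) : Prop :=
  csq u1 = e1 A B C D /\ csq u2 = e2 A B C D /\
  csq u3 = e3 A B C D /\ csq u4 = e4 A B C D /\
  same_sign (cross u1 u2) (cross (e1 A B C D) (e2 A B C D)) /\
  same_sign (cross u2 u3) (cross (e2 A B C D) (e3 A B C D)) /\
  same_sign (cross u3 u4) (cross (e3 A B C D) (e4 A B C D)).

Definition dot4 (x y : R * R * R * R) : R :=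
  let '(x1, x2, x3, x4) := x in let '(y1, y2, y3, y4) := y in
  x1 * y1 + x2 * y2 + x3 * y3 + x4 * y4.

Definition re4 (u1 u2 u3 u4 : pt) : R * R * R * R := (fst u1, fst u2, fst u3, fst u4).
Definition im4 (u1 u2 u3 u4 : pt) : R * R * R * R := (snd u1, snd u2, snd u3, snd u4).

(* (c, d) is an orthonormal basis of the orthogonal complement of span(a, b)
   in R^4 (which is 2-dimensional since a, b are orthonormal). *)
Definition onb_perp (a b c d : R * R * R * R) : Prop :=
  dot4 c c = 1 /\ dot4 d d = 1 /\ dot4 c d = 0 /\
  dot4 c a = 0 /\ dot4 c b = 0 /\ dot4 d a = 0 /\ dot4 d b = 0.

(* Edge vectors w_k = (c_k + i d_k)^2 of the dual quadrangle KLMN. *)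
Definition dual_edge1 (c d : R * R * R * R) : pt :=
  let '(c1, _, _, _) := c in let '(d1, _, _, _) := d in csq (c1, d1).
Definition dual_edge2 (c d : R * R * R * R) : pt :=
  let '(_, c2, _, _) := c in let '(_, d2, _, _) := d in csq (c2, d2).
Definition dual_edge3 (c d : R * R * R * R) : pt :=
  let '(_, _, c3, _) := c in let '(_, _, d3, _) := d in csq (c3, d3).
Definition dual_edge4 (c d : R * R * R * R) : pt :=
  let '(_, _, _, c4) := c in let '(_, _, _, d4) := d in csq (c4, d4).

From Stdlib Require Import Reals Lra Psatz.
Open Scope R_scope.

(** Write [u_k = a_k + i b_k] and [v_k = c_k + i d_k].  Closure
    [sum u_k^2 = 0] together with [sum |u_k|^2 = 2] says exactly that the
    vectors [a] and [b] of [R^4] are orthonormal, so the 4x4 matrix with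
    columns [a, b, c, d] is orthogonal and its rows are orthonormal too; in
    particular [Re (conj u1 u3) + Re (conj v1 v3) = 0].
    As [Im (conj (z^2) w^2) = 2 Re (conj z w) Im (conj z w)], the hypothesis
    [AB || CD] says that [Re (conj u1 u3)] or [Im (conj u1 u3)] vanishes.  The
    latter would make [AB] and [CD] point the same way, which convexity
    forbids; so [Re (conj u1 u3) = 0], hence [Re (conj v1 v3) = 0], and the
    same identity gives [KL || MN]. *)

(* Re (conj z * w) *)
Definition cdot (z w : pt) : R := fst z * fst w + snd z * snd w.

Lemma cross_csq (z w : pt) : cross (csq z) (csq w) = 2 * cdot z w * cross z w.
Proof. destruct z, w; unfold cross, csq, cmul, cdot; simpl; ring. Qed.

Lemma cabs_csq (z : pt) : cabs (csq z) = cdot z z.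
Proof.
  destruct z as [x y]; unfold cabs, csq, cmul, cdot; cbn [fst snd].
  replace ((x * x - y * y) ^ 2 + (x * y + y * x) ^ 2) with ((x * x + y * y) ^ 2)
    by ring.
  apply sqrt_pow2; nra.
Qed.

(* [|z|^2 w^2 - |w|^2 z^2 = 2 i Im (conj z w) z w]. *)
Lemma cross_csq_collinear (z w p : pt) :
  cross z w = 0 -> cdot z z * cross p (csq w) = cdot w w * cross p (csq z).
Proof.
  destruct z as [x y], w as [s t], p as [p q]; unfold cross, csq, cmul, cdot; simpl.
  intro Hzw.
  apply Rminus_diag_uniq.
  transitivity (2 * (x * t - y * s) * (p * (x * s - y * t) + q * (x * t + y * s)));
    [ring | rewrite Hzw; ring].
Qed.

(* For collinear [z], [w] the squares [csq z], [csq w] point the same way,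
   so the turns into and out of [p] would have opposite signs. *)
Lemma turning_csq_not_collinear (z w p : pt) :
  0 < cross (csq z) p * cross p (csq w) -> cross z w <> 0.
Proof.
  intros Hturn Hzw.
  pose proof (cross_csq_collinear z w p Hzw) as Hpar.
  assert (Hz0 : cdot z z = 0).
  { set (X := cross p (csq w)) in *; set (Y := cross (csq z) p) in *.
    assert (Hanti : cross p (csq z) = - Y) by (unfold Y, cross; ring).
    rewrite Hanti in Hpar.
    assert (0 <= cdot z z) by (unfold cdot; nra).
    assert (0 <= cdot w w) by (unfold cdot; nra).
    assert (Hsign : cdot z z * (Y * X) = - (cdot w w * Y ^ 2))
      by (rewrite <- Rmult_assoc, (Rmult_comm _ Y), Rmult_assoc, Hpar; ring).
    nra. }
  destruct z as [x y]; unfold cdot in Hz0; simpl in Hz0.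
  assert (x = 0) by nra; assert (y = 0) by nra; subst x y.
  revert Hturn; unfold cross, csq, cmul; simpl; lra.
Qed.

Lemma edges_sum_zero (A B C D : pt) :
  cadd (cadd (cadd (e1 A B C D) (e2 A B C D)) (e3 A B C D)) (e4 A B C D) = (0, 0).
Proof. unfold cadd, e1, e2, e3, e4, csub; simpl; f_equal; ring. Qed.

Lemma re4_im4_orthonormal (u1 u2 u3 u4 : pt) :
  cadd (cadd (cadd (csq u1) (csq u2)) (csq u3)) (csq u4) = (0, 0) ->
  cdot u1 u1 + cdot u2 u2 + cdot u3 u3 + cdot u4 u4 = 2 ->
  dot4 (re4 u1 u2 u3 u4) (re4 u1 u2 u3 u4) = 1 /\
  dot4 (im4 u1 u2 u3 u4) (im4 u1 u2 u3 u4) = 1 /\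
  dot4 (re4 u1 u2 u3 u4) (im4 u1 u2 u3 u4) = 0.
Proof.
  destruct u1, u2, u3, u4; unfold cadd, csq, cmul, cdot, re4, im4, dot4; simpl.
  intros Hsum Hnorm; injection Hsum as Hre Him.
  repeat split; lra.
Qed.

Section OrthogonalMatrix4.

Variables a1 a2 a3 a4 b1 b2 b3 b4 c1 c2 c3 c4 d1 d2 d3 d4 : R.

Local Notation a := (a1, a2, a3, a4).
Local Notation b := (b1, b2, b3, b4).
Local Notation c := (c1, c2, c3, c4).
Local Notation d := (d1, d2, d3, d4).
Local Notation r1 := (a1, b1, c1, d1).
Local Notation r2 := (a2, b2, c2, d2).
Local Notation r3 := (a3, b3, c3, d3).
Local Notation r4 := (a4, b4, c4, d4).

(* [|M M^T - I|^2 = |M^T M - I|^2] for the Frobenius norm. *)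
Lemma gram_defect_transpose :
  (dot4 r1 r1 - 1) ^ 2 + (dot4 r2 r2 - 1) ^ 2 + (dot4 r3 r3 - 1) ^ 2
    + (dot4 r4 r4 - 1) ^ 2
    + 2 * (dot4 r1 r2 ^ 2 + dot4 r1 r3 ^ 2 + dot4 r1 r4 ^ 2
           + dot4 r2 r3 ^ 2 + dot4 r2 r4 ^ 2 + dot4 r3 r4 ^ 2) =
  (dot4 a a - 1) ^ 2 + (dot4 b b - 1) ^ 2 + (dot4 c c - 1) ^ 2
    + (dot4 d d - 1) ^ 2
    + 2 * (dot4 a b ^ 2 + dot4 c a ^ 2 + dot4 c b ^ 2
           + dot4 d a ^ 2 + dot4 d b ^ 2 + dot4 c d ^ 2).
Proof. unfold dot4; ring. Qed.

Lemma onb_perp_rows_orthogonal :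
  dot4 a a = 1 -> dot4 b b = 1 -> dot4 a b = 0 -> onb_perp a b c d ->
  dot4 r1 r3 = 0.
Proof.
  intros Haa Hbb Hab (Hcc & Hdd & Hcd & Hca & Hcb & Hda & Hdb).
  pose proof gram_defect_transpose as Hgram.
  rewrite Haa, Hbb, Hab, Hcc, Hdd, Hcd, Hca, Hcb, Hda, Hdb in Hgram.
  apply Rsqr_0_uniq; rewrite Rsqr_pow2.
  pose proof (pow2_ge_0 (dot4 r1 r1 - 1)); pose proof (pow2_ge_0 (dot4 r2 r2 - 1)).
  pose proof (pow2_ge_0 (dot4 r3 r3 - 1)); pose proof (pow2_ge_0 (dot4 r4 r4 - 1)).
  pose proof (pow2_ge_0 (dot4 r1 r2)); pose proof (pow2_ge_0 (dot4 r1 r3)).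
  pose proof (pow2_ge_0 (dot4 r1 r4)); pose proof (pow2_ge_0 (dot4 r2 r3)).
  pose proof (pow2_ge_0 (dot4 r2 r4)); pose proof (pow2_ge_0 (dot4 r3 r4)).
  lra.
Qed.

End OrthogonalMatrix4.

Theorem theorem8p1 (A B C D u1 u2 u3 u4 : pt) (c d : R * R * R * R) :
  convex A B C D ->
  perimeter A B C D = 2 ->
  parallel (e1 A B C D) (e3 A B C D) ->
  admissible_roots A B C D u1 u2 u3 u4 ->
  onb_perp (re4 u1 u2 u3 u4) (im4 u1 u2 u3 u4) c d ->
  parallel (dual_edge1 c d) (dual_edge3 c d).
Proof.
  intros (_ & _ & _ & Hturns) Hper Hpar (Hz1 & Hz2 & Hz3 & Hz4 & _) Hcd.
  assert (Hu13 : cdot u1 u3 = 0).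
  { assert (Hturn : 0 < cross (csq u1) (csq u2) * cross (csq u2) (csq u3))
      by (rewrite Hz1, Hz2, Hz3; destruct Hturns as [(? & ? & _) | (? & ? & _)]; nra).
    apply turning_csq_not_collinear in Hturn.
    unfold parallel in Hpar; rewrite <- Hz1, <- Hz3, cross_csq in Hpar.
    nra. }
  destruct (re4_im4_orthonormal u1 u2 u3 u4) as (Haa & Hbb & Hab).
  { rewrite Hz1, Hz2, Hz3, Hz4; apply edges_sum_zero. }
  { rewrite <- !cabs_csq, Hz1, Hz2, Hz3, Hz4; exact Hper. }
  destruct u1, u2, u3, u4, c as [[[c1 c2] c3] c4], d as [[[d1 d2] d3] d4].
  pose proof (onb_perp_rows_orthogonal _ _ _ _ _ _ _ _ _ _ _ _ _ _ _ _ Haa Hbb Hab Hcd)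
    as Hrows.
  unfold parallel, dual_edge1, dual_edge3; rewrite cross_csq.
  unfold cdot, dot4 in *; simpl in *.
  replace (c1 * c3 + d1 * d3) with 0 by lra; ring.
Qed.
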